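(* Let $L>0$, $T>0$, $K,M$ positive integers, $\Delta x=L/K$, $\Delta t=T/M$, and $\hat L=\sqrt2\max\{\sqrt L,1/\sqrt L\}$. Let $(E,N,V)$ be a solution of the periodic Zakharov system $$\mathrm{i}E_t+E_{xx}=NE,\qquad N_t=V_{xx},\qquad V_t=N+|E|^2,\qquad V(0,0)=0$$ ($L$-periodic in $x$, initial data $E(0,\cdot)=E^0$, $N(0,\cdot)=N^0$, $N_t(0,\cdot)=N^1$ with $\int_0^LN^1\,\mathrm{d}x=0$) such that $E(t,\cdot),V(t,\cdot)$ are continuously differentiable. Let $C_\infty>0$ be a constant, independent of $\Delta t,\Delta x,m$, such that for all sufficiently small $\Delta x$, whenever $(E^{(0)},N^{(0)},V^{(0)}),\dots,(E^{(m)},N^{(m)},V^{(m)})$ solve the DVDM scheme below (with the initial data below), one has $\|E^{(m)}\|_2,\|\delta_x^+E^{(m)}\|_2,\|E^{(m)}\|_\infty,\|N^{(m)}\|_2,\|\delta_x^+V^{(m)}\|_2\le C_\infty$. Let $p>3$ and $r\ge C_\infty$. Set $$\varepsilon_1(p,r)=\frac{2(p-3)\Delta x}{2+2p(p\hat L+1)r+p(p+1)r(\Delta x)^{1/2}+(2p^2\hat L+p+1)r\Delta x},$$ $$\varepsilon_2(p,r)=\frac{\Delta x}{r\left(2p\hat L+1+(p+1/2)(\Delta x)^{1/2}+(2p\hat L+1/2)\Delta x\right)}.$$ If $\Delta t$ and $\Delta x$ are sufficiently small and $\Delta t<\min\{\Delta x,\varepsilon_1(p,r),\varepsilon_2(p,r)\}$,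 then the DVDM scheme $$\begin{cases}\mathrm{i}\,\delta_t^+E^{(m)}_k=-\delta_x^{\langle 2\rangle}\mu_t^+E^{(m)}_k+(\mu_t^+N^{(m)}_k)(\mu_t^+E^{(m)}_k),\\ \delta_t^+N^{(m)}_k=\delta_x^{\langle 2\rangle}\mu_t^+V^{(m)}_k,\\ \delta_t^+V^{(m)}_k=\mu_t^+N^{(m)}_k+\mu_t^+|E^{(m)}_k|^2,\end{cases}$$ with $E^{(0)}_k=E^0(k\Delta x)$, $N^{(0)}_k=N^0(k\Delta x)$ and $|V^{(0)}_k-V(0,k\Delta x)|\le C_V(\Delta x)^2$ (for a constant $C_V$ independent of $\Delta x$), has a unique solution $(E^{(m)},N^{(m)},V^{(m)})$ for $m=1,2,\dots,M$.
   Context: Grid functions $u^{(m)}=(u^{(m)}_k)_{k\in\mathbb{Z}}$ are $K$-periodic in $k$. Operators: $\delta_x^+u_k=(u_{k+1}-u_k)/\Delta x$, $\delta_x^{\langle 2\rangle}u_k=(u_{k+1}-2u_k+u_{k-1})/(\Delta x)^2$, $\delta_t^+u^{(m)}_k=(u^{(m+1)}_k-u^{(m)}_k)/\Delta t$, $\mu_t^+u^{(m)}_k=(u^{(m+1)}_k+u^{(m)}_k)/2$. Norms: $\|v\|_p=(\sum_{k=1}^K|v_k|^p\Delta x)^{1/p}$, $\|v\|_\infty=\max_k|v_k|$. *)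

From Stdlib Require Import Reals ZArith Lra Lia.
From Coquelicot Require Import Coquelicot.

(* Grid functions are Z-indexed; K-periodicity is imposed separately. *)
Definition periodicC (K : nat) (u : Z -> C) : Prop :=
  forall k : Z, u (k + Z.of_nat K)%Z = u k.
Definition periodicR (K : nat) (u : Z -> R) : Prop :=
  forall k : Z, u (k + Z.of_nat K)%Z = u k.

Fixpoint gsum (n : nat) (f : Z -> R) : R :=
  match n with
  | O => 0%R
  | S n' => (gsum n' f + f (Z.of_nat n))%R
  end.

(* gmax n f = max (0, f 1, ..., f n)  (used only on nonnegative f) *)
Fixpoint gmax (n : nat) (f : Z -> R) : R :=
  match n with
  | O => 0%R
  | S n' => Rmax (gmax n' f) (f (Z.of_nat n))
  end.

Definition norm2C (K : nat) (dx : R) (v : Z -> C) : R :=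
  sqrt (gsum K (fun k => Cmod (v k) ^ 2 * dx))%R.
Definition norm2R (K : nat) (dx : R) (v : Z -> R) : R :=
  sqrt (gsum K (fun k => Rabs (v k) ^ 2 * dx))%R.
Definition norminfC (K : nat) (v : Z -> C) : R :=
  gmax K (fun k => Cmod (v k)).

Definition dxpC (dx : R) (u : Z -> C) : Z -> C :=
  fun k => ((u (k + 1)%Z - u k) / RtoC dx)%C.
Definition dxpR (dx : R) (u : Z -> R) : Z -> R :=
  fun k => ((u (k + 1)%Z - u k) / dx)%R.
Definition dx2C (dx : R) (u : Z -> C) : Z -> C :=
  fun k => ((u (k + 1)%Z - RtoC 2 * u k + u (k - 1)%Z) / RtoC (dx ^ 2))%C.
Definition dx2R (dx : R) (u : Z -> R) : Z -> R :=
  fun k => ((u (k + 1)%Z - 2 * u k + u (k - 1)%Z) / dx ^ 2)%R.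

Definition dvdm_step (dx dt : R) (E : nat -> Z -> C) (N V : nat -> Z -> R)
  (m : nat) (k : Z) : Prop :=
  let muE := fun j => ((E (S m) j + E m j) / RtoC 2)%C in
  let muN := fun j => ((N (S m) j + N m j) / 2)%R in
  let muV := fun j => ((V (S m) j + V m j) / 2)%R in
  (Ci * ((E (S m) k - E m k) / RtoC dt)
     = - dx2C dx muE k + RtoC (muN k) * muE k)%C /\
  ((N (S m) k - N m k) / dt = dx2R dx muV k)%R /\
  ((V (S m) k - V m k) / dt
     = muN k + (Cmod (E (S m) k) ^ 2 + Cmod (E m k) ^ 2) / 2)%R.

Definition dvdm_solution (K : nat) (dx dt : R) (E0 : Z -> C) (N0 V0 : Z -> R)
  (m : nat) (E : nat -> Z -> C) (N V : nat -> Z -> R) : Prop :=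
  (forall j, (j <= m)%nat -> periodicC K (E j) /\ periodicR K (N j) /\ periodicR K (V j)) /\
  (forall k, E 0%nat k = E0 k /\ N 0%nat k = N0 k /\ V 0%nat k = V0 k) /\
  (forall j k, (j < m)%nat -> dvdm_step dx dt E N V j k).

Definition Lhat (L : R) : R := (sqrt 2 * Rmax (sqrt L) (/ sqrt L))%R.

Definition dvdm_eps1 (L dx p r : R) : R :=
  (2 * (p - 3) * dx /
   (2 + 2 * p * (p * Lhat L + 1) * r + p * (p + 1) * r * sqrt dx
    + (2 * p ^ 2 * Lhat L + p + 1) * r * dx))%R.

Definition dvdm_eps2 (L dx p r : R) : R :=
  (dx / (r * (2 * p * Lhat L + 1 + (p + 1 / 2) * sqrt dx
              + (2 * p * Lhat L + 1 / 2) * dx)))%R.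

Definition zakharov_solution (L T : R) (E : R -> R -> C) (N V : R -> R -> R) : Prop :=
  exists (Et Ex Exx : R -> R -> C) (Nt Vt Vx Vxx : R -> R -> R),
  (forall t x, 0 <= t <= T ->
     is_derive (fun s => E s x) t (Et t x) /\
     is_derive (fun y => E t y) x (Ex t x) /\
     is_derive (fun y => Ex t y) x (Exx t x) /\
     continuous (fun y => Ex t y) x /\
     is_derive (fun s => N s x) t (Nt t x) /\
     is_derive (fun s => V s x) t (Vt t x) /\
     is_derive (fun y => V t y) x (Vx t x) /\
     is_derive (fun y => Vx t y) x (Vxx t x) /\
     continuous (fun y => Vx t y) x /\
     (Ci * Et t x + Exx t x = RtoC (N t x) * E t x)%C /\
     Nt t x = Vxx t x /\
     Vt t x = (N t x + Cmod (E t x) ^ 2)%R /\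
     E t (x + L)%R = E t x /\ N t (x + L)%R = N t x /\ V t (x + L)%R = V t x) /\
  V 0 0 = 0%R /\
  is_RInt (fun x => Nt 0 x) 0 L 0%R.

(* Each step of the scheme is solved for E^(m+1) by a fixed-point argument.  For a
   given potential the Schroedinger half-step is a linear system u + T u = b with T
   skew-adjoint, and after eliminating V^(m+1) the wave half-step is a system
   u + T u = b with T = -(dt/2)^2/dx^2 times the (nonpositive) discrete Laplacian;
   systems with T monotone and Lipschitz are solved by a damped Banach iteration.
   The Schroedinger half-step conserves R2 = sum_k |E^(m)_k|^2, which bounds all
   intensities, and two summations by parts show that the map
   E |-> (N from the wave half-step with source |E|^2 + |E^(m)|^2)
     |-> (E from the Schroedinger half-step with that potential)
   is Lipschitz with constant dt^2 R2 / (2 dx) in the l^2 norm.  The a priori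
   bound ||E^(m)||_2 <= C_inf <= r and the mesh condition dt r < dx hidden in
   dt < eps2 make this constant < 1 at every step, so each step has exactly one
   solution, and induction on m gives the unique solution up to M. *)

From Stdlib Require Import Reals ZArith Lra Lia Psatz ClassicalEpsilon FunctionalExtensionality.
From Coquelicot Require Import Coquelicot.
Open Scope R_scope.

(** * Sums over one period and periodic grid functions *)

Lemma gsum_ext n (f g : Z -> R) :
  (forall k, (1 <= k <= Z.of_nat n)%Z -> f k = g k) -> gsum n f = gsum n g.
Proof.
  induction n; intros H; cbn [gsum]; [reflexivity|].
  f_equal; [apply IHn; intros|]; apply H; lia.
Qed.

Lemma gsum_le n (f g : Z -> R) :
  (forall k, (1 <= k <= Z.of_nat n)%Z -> f k <= g k) -> gsum n f <= gsum n g.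
Proof.
  induction n; intros H; cbn [gsum]; [lra|].
  apply Rplus_le_compat; [apply IHn; intros; apply H|apply H]; lia.
Qed.

Lemma gsum_plus n f g : gsum n (fun k => f k + g k) = gsum n f + gsum n g.
Proof. induction n; cbn [gsum]; [lra|]. rewrite IHn; lra. Qed.

Lemma gsum_minus n f g : gsum n (fun k => f k - g k) = gsum n f - gsum n g.
Proof. induction n; cbn [gsum]; [lra|]. rewrite IHn; lra. Qed.

Lemma gsum_opp n f : gsum n (fun k => - f k) = - gsum n f.
Proof. induction n; cbn [gsum]; [lra|]. rewrite IHn; lra. Qed.

Lemma gsum_scal n c f : gsum n (fun k => c * f k) = c * gsum n f.
Proof. induction n; cbn [gsum]; [lra|]. rewrite IHn; lra. Qed.

Lemma gsum_const n c : gsum n (fun _ => c) = INR n * c.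
Proof. induction n; cbn [gsum]; [simpl; lra|]. rewrite IHn, S_INR; lra. Qed.

Lemma gsum_nonneg n f :
  (forall k, (1 <= k <= Z.of_nat n)%Z -> 0 <= f k) -> 0 <= gsum n f.
Proof.
  intros H. rewrite <- (Rmult_0_r (INR n)), <- gsum_const. apply gsum_le; auto.
Qed.

Lemma le_gsum n f k :
  (forall j, (1 <= j <= Z.of_nat n)%Z -> 0 <= f j) ->
  (1 <= k <= Z.of_nat n)%Z -> f k <= gsum n f.
Proof.
  induction n; intros H Hk; [simpl in Hk; lia|]. cbn [gsum].
  assert (0 <= gsum n f) by (apply gsum_nonneg; intros; apply H; lia).
  destruct (Z.eq_dec k (Z.of_nat (S n))) as [->|Hne].
  - lra.
  - assert (f k <= gsum n f) by (apply IHn; [intros; apply H|]; lia).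
    assert (0 <= f (Z.of_nat (S n))) by (apply H; lia). lra.
Qed.

Lemma gsum_shift_pred n h :
  gsum n (fun k => h (k - 1)%Z) = h 0%Z + gsum n h - h (Z.of_nat n).
Proof.
  induction n; cbn [gsum]; [simpl; lra|]. rewrite IHn.
  replace (Z.of_nat (S n) - 1)%Z with (Z.of_nat n) by lia. lra.
Qed.

Lemma gsum_shift_succ n h :
  gsum n (fun k => h (k + 1)%Z) = gsum n h - h 1%Z + h (Z.of_nat n + 1)%Z.
Proof.
  induction n; cbn [gsum]; [simpl; lra|]. rewrite IHn.
  replace (Z.of_nat (S n)) with (Z.of_nat n + 1)%Z by lia.
  destruct n; simpl; lra.
Qed.

Lemma periodic_shift {A} K (f : Z -> A) :
  (forall k, f (k + Z.of_nat K)%Z = f k) -> forall k q, f (k + q * Z.of_nat K)%Z = f k.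
Proof.
  intros H.
  assert (Hnat : forall k (n : nat), f (k + Z.of_nat n * Z.of_nat K)%Z = f k).
  { intros k n. induction n; [f_equal; lia|].
    rewrite <- IHn, <- (H (k + Z.of_nat n * Z.of_nat K)%Z). f_equal; lia. }
  intros k q. destruct (Z_le_gt_dec 0 q).
  - rewrite <- (Z2Nat.id q) by lia. apply Hnat.
  - rewrite <- (Hnat (k + q * Z.of_nat K)%Z (Z.to_nat (- q))). f_equal. lia.
Qed.

Lemma periodic_representative {A} K (f : Z -> A) : (0 < K)%nat ->
  (forall k, f (k + Z.of_nat K)%Z = f k) ->
  forall k, exists j, (1 <= j <= Z.of_nat K)%Z /\ f k = f j.
Proof.
  intros HK H k. exists ((k - 1) mod Z.of_nat K + 1)%Z. split.
  - pose proof (Z.mod_pos_bound (k - 1) (Z.of_nat K)). lia.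
  - rewrite <- (periodic_shift K f H ((k - 1) mod Z.of_nat K + 1)%Z ((k - 1) / Z.of_nat K)).
    f_equal.
    pose proof (Z.div_mod (k - 1) (Z.of_nat K) ltac:(lia)). lia.
Qed.

Ltac solve_periodic :=
  let k := fresh "k" in
  intro k; cbv beta;
  repeat match goal with
    | H : periodicR _ ?f |- context [?f (k + _)%Z] => rewrite (H k)
    | H : periodicC _ ?f |- context [?f (k + _)%Z] => rewrite (H k)
    end;
  reflexivity.

(** * Difference operators and summation by parts *)

Definition lap (f : Z -> R) (k : Z) : R := f (k + 1)%Z - 2 * f k + f (k - 1)%Z.
Definition fwd (f : Z -> R) (k : Z) : R := f (k + 1)%Z - f k.
Definition sqnormR (K : nat) (f : Z -> R) : R := gsum K (fun k => f k ^ 2).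

Lemma lap_minus f g k : lap f k - lap g k = lap (fun j => f j - g j) k.
Proof. unfold lap; ring. Qed.

Lemma lap_plus f g k : lap f k + lap g k = lap (fun j => f j + g j) k.
Proof. unfold lap; ring. Qed.

Lemma periodicR_fwd K f : periodicR K f -> periodicR K (fwd f).
Proof.
  intros H k. unfold fwd.
  replace (k + Z.of_nat K + 1)%Z with (k + 1 + Z.of_nat K)%Z by lia.
  rewrite !H. reflexivity.
Qed.

Lemma periodicR_lap K f : periodicR K f -> periodicR K (lap f).
Proof.
  intros H k. unfold lap.
  replace (k + Z.of_nat K + 1)%Z with (k + 1 + Z.of_nat K)%Z by lia.
  replace (k + Z.of_nat K - 1)%Z with (k - 1 + Z.of_nat K)%Z by lia.
  rewrite !H. reflexivity.
Qed.

Lemma gsum_shift_succ_periodic K h : periodicR K h ->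
  gsum K (fun k => h (k + 1)%Z) = gsum K h.
Proof.
  intros H. rewrite gsum_shift_succ, Z.add_comm, H. lra.
Qed.

Lemma gsum_shift_pred_periodic K h : periodicR K h ->
  gsum K (fun k => h (k - 1)%Z) = gsum K h.
Proof.
  intros H. rewrite gsum_shift_pred, <- (H 0%Z), Z.add_0_l. lra.
Qed.

Lemma sum_lap_mul K f g : periodicR K f -> periodicR K g ->
  gsum K (fun k => lap f k * g k) = - gsum K (fun k => fwd f k * fwd g k).
Proof.
  intros Hf Hg.
  set (h := fun j => fwd f j * g (j + 1)%Z).
  assert (Hh : periodicR K h).
  { intros k. unfold h. rewrite (periodicR_fwd K f Hf k).
    replace (k + Z.of_nat K + 1)%Z with (k + 1 + Z.of_nat K)%Z by lia.
    rewrite Hg. reflexivity. }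
  transitivity (gsum K (fun k => fwd f k * g k - h (k - 1)%Z)).
  { apply gsum_ext; intros k _. unfold h, lap, fwd.
    replace (k - 1 + 1)%Z with k by lia. ring. }
  rewrite gsum_minus, gsum_shift_pred_periodic by exact Hh.
  rewrite <- gsum_minus, <- gsum_opp.
  apply gsum_ext; intros k _. unfold h, fwd. ring.
Qed.

Lemma sum_lap_mul_comm K f g : periodicR K f -> periodicR K g ->
  gsum K (fun k => lap f k * g k) = gsum K (fun k => lap g k * f k).
Proof.
  intros Hf Hg. rewrite !sum_lap_mul by assumption.
  f_equal. apply gsum_ext; intros; ring.
Qed.

Lemma sum_lap_mul_self_nonpos K f : periodicR K f ->
  gsum K (fun k => lap f k * f k) <= 0.
Proof.
  intros Hf. rewrite sum_lap_mul by assumption.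
  enough (0 <= gsum K (fun k => fwd f k * fwd f k)) by lra.
  apply gsum_nonneg; intros; apply Rle_0_sqr.
Qed.

Lemma sqnormR_fwd_le K f : periodicR K f -> sqnormR K (fwd f) <= 4 * sqnormR K f.
Proof.
  intros H. unfold sqnormR.
  apply Rle_trans with (gsum K (fun k => 2 * f (k + 1)%Z ^ 2 + 2 * f k ^ 2)).
  { apply gsum_le; intros k _. unfold fwd.
    pose proof (pow2_ge_0 (f (k + 1)%Z + f k)). nra. }
  rewrite gsum_plus, !gsum_scal.
  rewrite (gsum_shift_succ_periodic K (fun k => f k ^ 2)) by solve_periodic. lra.
Qed.

Lemma sqnormR_lap_le K f : periodicR K f -> sqnormR K (lap f) <= 16 * sqnormR K f.
Proof.
  intros H. unfold sqnormR.
  apply Rle_trans with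
    (gsum K (fun k => 4 * f (k + 1)%Z ^ 2 + 8 * f k ^ 2 + 4 * f (k - 1)%Z ^ 2)).
  { apply gsum_le; intros k _. unfold lap.
    pose proof (pow2_ge_0 (f (k + 1)%Z + 2 * f k + f (k - 1)%Z)).
    pose proof (pow2_ge_0 (f (k + 1)%Z - f (k - 1)%Z)). nra. }
  rewrite !gsum_plus, !gsum_scal.
  rewrite (gsum_shift_succ_periodic K (fun k => f k ^ 2)) by solve_periodic.
  rewrite (gsum_shift_pred_periodic K (fun k => f k ^ 2)) by solve_periodic. lra.
Qed.

Lemma sqnormR_nonneg K f : 0 <= sqnormR K f.
Proof. apply gsum_nonneg; intros; apply pow2_ge_0. Qed.

Lemma sq_le_sqnormR K f : (0 < K)%nat -> periodicR K f -> forall k, f k ^ 2 <= sqnormR K f.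
Proof.
  intros HK Hf k. destruct (periodic_representative K f HK Hf k) as [j [Hj ->]].
  apply (le_gsum K (fun k => f k ^ 2)); auto. intros; apply pow2_ge_0.
Qed.

Lemma Rabs_le_of_sq_le x y : 0 <= y -> x ^ 2 <= y ^ 2 -> Rabs x <= y.
Proof.
  intros Hy H. rewrite <- (pow2_abs x) in H. pose proof (Rabs_pos x). nra.
Qed.

Lemma sq_le_of_Rabs_le x y : Rabs x <= y -> x ^ 2 <= y ^ 2.
Proof.
  intros H. rewrite <- (pow2_abs x). pose proof (Rabs_pos x).
  apply pow_incr. lra.
Qed.

Lemma sq_nonpos_eq0 x : x ^ 2 <= 0 -> x = 0.
Proof. nra. Qed.

Lemma sqnormR_eq0 K f : (0 < K)%nat -> periodicR K f -> sqnormR K f <= 0 ->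
  forall k, f k = 0.
Proof.
  intros HK Hf H k. pose proof (sq_le_sqnormR K f HK Hf k).
  apply sq_nonpos_eq0. lra.
Qed.

Definition csub (u v : Z -> C) : Z -> C :=
  fun k => (fst (u k) - fst (v k), snd (u k) - snd (v k)).
Definition sqnormC (K : nat) (u : Z -> C) : R :=
  gsum K (fun k => fst (u k) ^ 2 + snd (u k) ^ 2).
Definition dotC (K : nat) (u v : Z -> C) : R :=
  gsum K (fun k => fst (u k) * fst (v k) + snd (u k) * snd (v k)).

Lemma periodicC_csub K u v : periodicC K u -> periodicC K v -> periodicC K (csub u v).
Proof. intros Hu Hv. unfold csub. solve_periodic. Qed.

Lemma sqnormC_nonneg K u : 0 <= sqnormC K u.
Proof. apply gsum_nonneg; intros; nra. Qed.

Lemma sqnormC_split K u :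
  sqnormC K u = sqnormR K (fun k => fst (u k)) + sqnormR K (fun k => snd (u k)).
Proof. apply gsum_plus. Qed.

Lemma csq_le_sqnormC K u : (0 < K)%nat -> periodicC K u ->
  forall k, fst (u k) ^ 2 + snd (u k) ^ 2 <= sqnormC K u.
Proof.
  intros HK Hu k. destruct (periodic_representative K u HK Hu k) as [j [Hj ->]].
  apply (le_gsum K (fun k => fst (u k) ^ 2 + snd (u k) ^ 2)); auto. intros; nra.
Qed.

Lemma sqnormC_csub_eq0 K u v : (0 < K)%nat -> periodicC K u -> periodicC K v ->
  sqnormC K (csub u v) <= 0 -> forall k, u k = v k.
Proof.
  intros HK Hu Hv H k.
  pose proof (csq_le_sqnormC K _ HK (periodicC_csub K u v Hu Hv) k) as Hk.
  unfold csub in Hk; cbn [fst snd] in Hk. fold (csub u v) in Hk. revert Hk.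
  destruct (u k) as [x y], (v k) as [x' y']; cbn [fst snd]; intros Hk.
  pose proof (pow2_ge_0 (x - x')). pose proof (pow2_ge_0 (y - y')).
  f_equal; apply Rminus_diag_uniq, sq_nonpos_eq0; lra.
Qed.

Lemma sqnormC_csub_sym K u v : sqnormC K (csub u v) = sqnormC K (csub v u).
Proof. apply gsum_ext; intros; unfold csub; cbn [fst snd]; ring. Qed.

Lemma sqnormC_csub_triangle K u v w :
  sqnormC K (csub u w) <= 2 * sqnormC K (csub u v) + 2 * sqnormC K (csub v w).
Proof.
  unfold sqnormC. rewrite <- !gsum_scal, <- gsum_plus.
  apply gsum_le; intros k _. unfold csub; cbn [fst snd].
  pose proof (pow2_ge_0 (fst (u k) - 2 * fst (v k) + fst (w k))).
  pose proof (pow2_ge_0 (snd (u k) - 2 * snd (v k) + snd (w k))). nra.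
Qed.

(** * Banach's fixed point theorem on periodic grid functions *)

Lemma geometric_tail (y : nat -> R) c B : 0 <= c < 1 -> 0 <= B ->
  (forall n, Rabs (y (S n) - y n) <= c ^ n * B) ->
  forall n m, (n <= m)%nat -> Rabs (y m - y n) <= c ^ n * B / (1 - c).
Proof.
  intros Hc HB H n m Hnm.
  assert (Htele : forall i,
            Rabs (y (i + n)%nat - y n) <= B * (c ^ n - c ^ (i + n)) / (1 - c)).
  { induction i.
    - replace (y (0 + n)%nat - y n) with 0 by (simpl; ring). rewrite Rabs_R0.
      replace (B * (c ^ n - c ^ (0 + n)) / (1 - c)) with 0 by (simpl; field; lra). lra.
    - replace (S i + n)%nat with (S (i + n)) by lia.
      replace (y (S (i + n)) - y n)
        with ((y (S (i + n)) - y (i + n)%nat) + (y (i + n)%nat - y n)) by ring.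
      eapply Rle_trans; [apply Rabs_triang|].
      replace (B * (c ^ n - c ^ S (i + n)) / (1 - c)) with
        (c ^ (i + n) * B + B * (c ^ n - c ^ (i + n)) / (1 - c)) by (simpl; field; lra).
      specialize (H (i + n)%nat). lra. }
  replace m with ((m - n) + n)%nat by lia.
  eapply Rle_trans; [apply Htele|].
  assert (0 <= c ^ (m - n + n)) by (apply pow_le; lra).
  apply Rmult_le_compat_r; [apply Rlt_le, Rinv_0_lt_compat; lra|]. nra.
Qed.

Lemma geometric_cauchy (y : nat -> R) c B : 0 <= c < 1 -> 0 <= B ->
  (forall n, Rabs (y (S n) - y n) <= c ^ n * B) -> ex_lim_seq_cauchy y.
Proof.
  intros Hc HB H [eps Heps]; simpl.
  destruct (pow_lt_1_zero c ltac:(rewrite Rabs_pos_eq; lra) (eps * (1 - c) / (2 * B + 1)))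
    as [N HN]; [apply Rdiv_lt_0_compat; nra|].
  exists N. intros n m Hn Hm.
  specialize (HN N (le_n N)). rewrite Rabs_pos_eq in HN by (apply pow_le; lra).
  replace (y n - y m) with ((y n - y N) - (y m - y N)) by ring.
  eapply Rle_lt_trans; [apply Rabs_triang|]. rewrite Rabs_Ropp.
  pose proof (geometric_tail y c B Hc HB H N n Hn).
  pose proof (geometric_tail y c B Hc HB H N m Hm).
  assert (c ^ N * (2 * B + 1) < eps * (1 - c)).
  { apply (Rmult_lt_compat_r (2 * B + 1)) in HN; [|lra].
    unfold Rdiv in HN. rewrite Rmult_assoc, Rinv_l in HN; lra. }
  assert (2 * (c ^ N * B / (1 - c)) < eps).
  { apply (Rmult_lt_reg_r (1 - c)); [lra|]. unfold Rdiv.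
    rewrite (Rmult_assoc 2), Rmult_assoc, Rinv_l; [|lra]. pose proof (pow_le c N). nra. }
  lra.
Qed.

Lemma geometric_limit_bound (y : nat -> R) c B : 0 <= c < 1 -> 0 <= B ->
  (forall n, Rabs (y (S n) - y n) <= c ^ n * B) ->
  forall n, Rabs (real (Lim_seq y) - y n) <= c ^ n * B / (1 - c).
Proof.
  intros Hc HB H.
  assert (Hlim : Un_cv y (real (Lim_seq y))).
  { apply is_lim_seq_Reals, Lim_seq_correct', ex_lim_seq_cauchy_corr.
    exact (geometric_cauchy y c B Hc HB H). }
  set (l := real (Lim_seq y)) in *.
  intros n. apply Rnot_lt_le. intros Hlt.
  destruct (Hlim (Rabs (l - y n) - c ^ n * B / (1 - c))) as [N HN]; [lra|].
  specialize (HN (Nat.max N n) ltac:(lia)). unfold R_dist in HN.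
  pose proof (geometric_tail y c B Hc HB H n (Nat.max N n) ltac:(lia)).
  pose proof (Rabs_triang (l - y (Nat.max N n)) (y (Nat.max N n) - y n)).
  replace (l - y (Nat.max N n) + (y (Nat.max N n) - y n)) with (l - y n) in * by ring.
  rewrite <- Rabs_Ropp, Ropp_minus_distr in HN. lra.
Qed.

Lemma geometric_le_zero A D q : 0 <= D -> 0 <= q < 1 ->
  (forall n, A <= D * q ^ n) -> A <= 0.
Proof.
  intros HD Hq H. apply Rnot_lt_le. intros HA.
  destruct (pow_lt_1_zero q ltac:(rewrite Rabs_pos_eq; lra) (A / (D + 1))) as [N HN].
  { apply Rdiv_lt_0_compat; lra. }
  specialize (HN N (le_n N)). rewrite Rabs_pos_eq in HN by (apply pow_le; lra).
  specialize (H N). apply (Rmult_lt_compat_r (D + 1)) in HN; [|lra].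
  unfold Rdiv in HN. rewrite Rmult_assoc, Rinv_l in HN by lra.
  pose proof (pow_le q N ltac:(lra)). nra.
Qed.

Section ContractionFixpoint.

Variable K : nat.
Hypothesis HK : (0 < K)%nat.
Variable Phi : (Z -> C) -> (Z -> C).
Variable c : R.
Hypothesis Hc : 0 <= c < 1.
Hypothesis Hper : forall u, periodicC K u -> periodicC K (Phi u).
Hypothesis Hcontr : forall u v, periodicC K u -> periodicC K v ->
  sqnormC K (csub (Phi u) (Phi v)) <= c ^ 2 * sqnormC K (csub u v).

Let x (n : nat) : Z -> C := Nat.iter n Phi (fun _ => (0, 0)).

Let x_periodic n : periodicC K (x n).
Proof. induction n; [intros k; reflexivity|]. apply Hper, IHn. Qed.

Let d0 := sqnormC K (csub (x 1%nat) (x 0%nat)).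

Let x_increment n : sqnormC K (csub (x (S n)) (x n)) <= (c ^ 2) ^ n * d0.
Proof.
  induction n; [rewrite pow_O; unfold d0; lra|].
  eapply Rle_trans; [apply (Hcontr (x (S n)) (x n)); apply x_periodic|].
  change ((c ^ 2) ^ S n) with (c ^ 2 * (c ^ 2) ^ n). rewrite Rmult_assoc.
  apply Rmult_le_compat_l; [apply pow2_ge_0 | exact IHn].
Qed.

Let x_coord_increment k n :
  Rabs (fst (x (S n) k) - fst (x n k)) <= c ^ n * sqrt d0 /\
  Rabs (snd (x (S n) k) - snd (x n k)) <= c ^ n * sqrt d0.
Proof.
  pose proof (csq_le_sqnormC K _ HK
                (periodicC_csub K _ _ (x_periodic (S n)) (x_periodic n)) k) as H.
  pose proof (x_increment n). unfold csub at 1 2 in H; cbn [fst snd] in H.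
  assert (Hsq : (c ^ n * sqrt d0) ^ 2 = (c ^ 2) ^ n * d0).
  { rewrite Rpow_mult_distr, pow2_sqrt by apply sqnormC_nonneg.
    rewrite <- !pow_mult, Nat.mul_comm. reflexivity. }
  assert (0 <= c ^ n * sqrt d0) by (apply Rmult_le_pos; [apply pow_le; lra | apply sqrt_pos]).
  pose proof (pow2_ge_0 (fst (x (S n) k) - fst (x n k))).
  pose proof (pow2_ge_0 (snd (x (S n) k) - snd (x n k))).
  split; apply Rabs_le_of_sq_le; lra.
Qed.

(* [Lim_seq] is total; [geometric_limit_bound] shows that these are actual limits. *)
Let xlim (k : Z) : C :=
  (real (Lim_seq (fun n => fst (x n k))), real (Lim_seq (fun n => snd (x n k)))).

Let xlim_periodic : periodicC K xlim.
Proof.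
  intros k. unfold xlim.
  f_equal; f_equal; apply Lim_seq_ext; intros n; rewrite x_periodic; reflexivity.
Qed.

Let xlim_dist n :
  sqnormC K (csub xlim (x n)) <= (c ^ 2) ^ n * (2 * INR K * (sqrt d0 / (1 - c)) ^ 2).
Proof.
  set (e := c ^ n * sqrt d0 / (1 - c)).
  apply Rle_trans with (gsum K (fun _ => 2 * e ^ 2)).
  { apply gsum_le; intros k _. unfold csub, xlim; cbn [fst snd].
    pose proof (geometric_limit_bound (fun n => fst (x n k)) c (sqrt d0) Hc (sqrt_pos d0)
      (fun n => proj1 (x_coord_increment k n)) n).
    pose proof (geometric_limit_bound (fun n => snd (x n k)) c (sqrt d0) Hc (sqrt_pos d0)
      (fun n => proj2 (x_coord_increment k n)) n).
    apply sq_le_of_Rabs_le in H, H0. unfold e. lra. }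
  rewrite gsum_const. right. unfold e.
  rewrite <- pow_mult, Nat.mul_comm, pow_mult. field. lra.
Qed.

Lemma contraction_fixpoint : exists u, periodicC K u /\ forall k, Phi u k = u k.
Proof.
  set (D := 2 * INR K * (sqrt d0 / (1 - c)) ^ 2).
  assert (HD : 0 <= D)
    by (unfold D; pose proof (pos_INR K); pose proof (pow2_ge_0 (sqrt d0 / (1 - c))); nra).
  exists xlim. split; [exact xlim_periodic|].
  apply (sqnormC_csub_eq0 K _ _ HK (Hper _ xlim_periodic) xlim_periodic).
  apply (geometric_le_zero _ (4 * D) (c ^ 2)); [lra | split; [apply pow2_ge_0 | nra] |].
  intros n.
  eapply Rle_trans; [apply (sqnormC_csub_triangle K _ (Phi (x n)))|].
  rewrite (sqnormC_csub_sym K (Phi (x n))).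
  pose proof (Hcontr _ _ xlim_periodic (x_periodic n)).
  pose proof (xlim_dist n) as Hn. pose proof (xlim_dist (S n)) as HSn.
  change ((c ^ 2) ^ S n) with (c ^ 2 * (c ^ 2) ^ n) in HSn. fold D in Hn, HSn.
  change (x (S n)) with (Phi (x n)) in HSn.
  assert (0 <= (c ^ 2) ^ n) by (apply pow_le, pow2_ge_0).
  assert (c ^ 2 * ((c ^ 2) ^ n * D) <= (c ^ 2) ^ n * D).
  { assert (c ^ 2 <= 1) by (simpl; nra).
    pose proof (Rmult_le_pos _ _ H0 HD). nra. }
  assert (0 <= sqnormC K (csub xlim (x n))) by apply sqnormC_nonneg.
  assert (c ^ 2 * sqnormC K (csub xlim (x n)) <= c ^ 2 * ((c ^ 2) ^ n * D))
    by (apply Rmult_le_compat_l; [apply pow2_ge_0 | exact Hn]).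
  lra.
Qed.

End ContractionFixpoint.

(** * Equations u + T u = b with T monotone and Lipschitz *)

Definition damped_map (al : R) (T : (Z -> C) -> (Z -> C)) (b u : Z -> C) (k : Z) : C :=
  ((1 - al) * fst (u k) - al * fst (T u k) + al * fst (b k),
   (1 - al) * snd (u k) - al * snd (T u k) + al * snd (b k)).

Lemma damped_map_sqnorm K al T b u v :
  sqnormC K (csub (damped_map al T b u) (damped_map al T b v)) =
  (1 - al) ^ 2 * sqnormC K (csub u v)
  - 2 * al * (1 - al) * dotC K (csub (T u) (T v)) (csub u v)
  + al ^ 2 * sqnormC K (csub (T u) (T v)).
Proof.
  unfold sqnormC, dotC. rewrite <- !gsum_scal, <- gsum_minus, <- gsum_plus.
  apply gsum_ext; intros k _. unfold csub, damped_map; cbn [fst snd]. ring.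
Qed.

Lemma monotone_lipschitz_solvable K (T : (Z -> C) -> (Z -> C)) (b : Z -> C) B :
  (0 < K)%nat -> 0 <= B -> periodicC K b ->
  (forall u, periodicC K u -> periodicC K (T u)) ->
  (forall u v, periodicC K u -> periodicC K v ->
     0 <= dotC K (csub (T u) (T v)) (csub u v)) ->
  (forall u v, periodicC K u -> periodicC K v ->
     sqnormC K (csub (T u) (T v)) <= B * sqnormC K (csub u v)) ->
  exists u, periodicC K u /\ forall k,
    fst (u k) + fst (T u k) = fst (b k) /\ snd (u k) + snd (T u k) = snd (b k).
Proof.
  intros HK HB Hb Hper Hmon Hlip.
  set (al := / (B + 1)).
  assert (Hal : 0 < al <= 1).
  { unfold al. split; [apply Rinv_0_lt_compat; lra|].
    rewrite <- Rinv_1. apply Rinv_le_contravar; lra. }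
  (* the squared Lipschitz constant of the damped map is (1 - al)^2 + al^2 B = B / (B + 1) *)
  destruct (contraction_fixpoint K HK (damped_map al T b) (sqrt (B / (B + 1))))
    as [u [Hu Hfix]].
  - split; [apply sqrt_pos|].
    apply Rlt_le_trans with (sqrt 1); [apply sqrt_lt_1_alt | rewrite sqrt_1; lra].
    split; [apply Rdiv_le_0_compat; lra|]. apply Rmult_lt_reg_r with (B + 1); [lra|].
    unfold Rdiv. rewrite Rmult_assoc, Rinv_l; lra.
  - intros u Hu. unfold damped_map. pose proof (Hper u Hu). solve_periodic.
  - intros u v Hu Hv.
    rewrite pow2_sqrt, damped_map_sqnorm by (apply Rdiv_le_0_compat; lra).
    assert (Hq : (1 - al) ^ 2 + al ^ 2 * B = B / (B + 1)) by (unfold al; field; lra).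
    specialize (Hmon u v Hu Hv). specialize (Hlip u v Hu Hv).
    pose proof (sqnormC_nonneg K (csub u v)).
    assert (al ^ 2 * sqnormC K (csub (T u) (T v)) <= al ^ 2 * (B * sqnormC K (csub u v)))
      by (apply Rmult_le_compat_l; [apply pow2_ge_0 | exact Hlip]).
    assert (0 <= 2 * al * (1 - al) * dotC K (csub (T u) (T v)) (csub u v))
      by (apply Rmult_le_pos; [nra | exact Hmon]).
    rewrite <- Hq. nra.
  - exists u. split; [exact Hu|]. intros k. specialize (Hfix k). unfold damped_map in Hfix.
    revert Hfix. destruct (u k) as [x y]. intros Hfix. injection Hfix as H1 H2.
    cbn [fst snd]. split; apply (Rmult_eq_reg_l al); lra.
Qed.

(** * The two linear half-steps *)

(* The Schroedinger and wave parts of one step of the scheme in real components,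
   with [a = dt / 2]. *)
Definition schr_rel (dx a : R) (E0 : Z -> C) (P : Z -> R) (E1 : Z -> C) : Prop :=
  forall k,
    fst (E1 k) - fst (E0 k) = - (a / dx ^ 2) * lap (fun j => snd (E1 j) + snd (E0 j)) k
                              + a * P k * (snd (E1 k) + snd (E0 k)) /\
    snd (E1 k) - snd (E0 k) = (a / dx ^ 2) * lap (fun j => fst (E1 j) + fst (E0 j)) k
                              - a * P k * (fst (E1 k) + fst (E0 k)).

Definition wave_rel (dx a : R) (N0 V0 W N1 V1 : Z -> R) : Prop :=
  forall k,
    N1 k - N0 k = (a / dx ^ 2) * lap (fun j => V1 j + V0 j) k /\
    V1 k - V0 k = a * (N1 k + N0 k) + a * W k.

Section SchrodingerOperator.

Variables (K : nat) (be a : R) (P : Z -> R).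
Hypotheses (HK : (0 < K)%nat) (HP : periodicR K P).

Definition schr_op (w : Z -> C) (k : Z) : C :=
  (be * lap (fun j => snd (w j)) k - a * P k * snd (w k),
   - be * lap (fun j => fst (w j)) k + a * P k * fst (w k)).

Lemma schr_op_periodic w : periodicC K w -> periodicC K (schr_op w).
Proof.
  intros Hw k. unfold schr_op.
  rewrite (periodicR_lap K (fun j => snd (w j))), (periodicR_lap K (fun j => fst (w j)))
    by solve_periodic.
  rewrite Hw, HP. reflexivity.
Qed.

Lemma schr_op_csub u v k : csub (schr_op u) (schr_op v) k = schr_op (csub u v) k.
Proof. unfold schr_op, csub; cbn [fst snd]. rewrite <- !lap_minus. f_equal; ring. Qed.

Lemma schr_op_skew u v : periodicC K u -> periodicC K v ->
  dotC K (csub (schr_op u) (schr_op v)) (csub u v) = 0.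
Proof.
  intros Hu Hv. set (d := csub u v).
  assert (Hd : periodicC K d) by (apply periodicC_csub; assumption).
  transitivity (be * (gsum K (fun k => lap (fun j => snd (d j)) k * fst (d k))
                      - gsum K (fun k => lap (fun j => fst (d j)) k * snd (d k)))).
  - unfold dotC. rewrite <- gsum_minus, <- gsum_scal.
    apply gsum_ext; intros k _. rewrite schr_op_csub. unfold schr_op; cbn [fst snd]. fold d. ring.
  - rewrite (sum_lap_mul_comm K (fun j => snd (d j))) by solve_periodic. ring.
Qed.

Lemma schr_op_lipschitz u v : periodicC K u -> periodicC K v ->
  sqnormC K (csub (schr_op u) (schr_op v))
  <= (32 * be ^ 2 + 2 * a ^ 2 * sqnormR K P) * sqnormC K (csub u v).
Proof.
  intros Hu Hv. set (d := csub u v).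
  assert (Hd : periodicC K d) by (apply periodicC_csub; assumption).
  set (d1 := fun j => fst (d j)). set (d2 := fun j => snd (d j)).
  set (Pm := sqnormR K P).
  apply Rle_trans with (gsum K (fun k =>
    2 * be ^ 2 * (lap d1 k ^ 2 + lap d2 k ^ 2) + 2 * a ^ 2 * Pm * (d1 k ^ 2 + d2 k ^ 2))).
  - apply gsum_le; intros k _. rewrite schr_op_csub. unfold schr_op; cbn [fst snd]. fold d d1 d2.
    change (fst (d k)) with (d1 k). change (snd (d k)) with (d2 k).
    pose proof (sq_le_sqnormR K P HK HP k) as HPk. fold Pm in HPk.
    assert ((a * P k * d1 k) ^ 2 <= a ^ 2 * Pm * d1 k ^ 2).
    { replace ((a * P k * d1 k) ^ 2) with (a ^ 2 * d1 k ^ 2 * P k ^ 2) by ring.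
      pose proof (Rmult_le_pos _ _ (pow2_ge_0 a) (pow2_ge_0 (d1 k))). nra. }
    assert ((a * P k * d2 k) ^ 2 <= a ^ 2 * Pm * d2 k ^ 2).
    { replace ((a * P k * d2 k) ^ 2) with (a ^ 2 * d2 k ^ 2 * P k ^ 2) by ring.
      pose proof (Rmult_le_pos _ _ (pow2_ge_0 a) (pow2_ge_0 (d2 k))). nra. }
    pose proof (pow2_ge_0 (be * lap d2 k + a * P k * d2 k)).
    pose proof (pow2_ge_0 (be * lap d1 k + a * P k * d1 k)). nra.
  - pose proof (sqnormR_lap_le K d1 ltac:(unfold d1; solve_periodic)) as L1.
    pose proof (sqnormR_lap_le K d2 ltac:(unfold d2; solve_periodic)) as L2.
    rewrite gsum_plus, !gsum_scal, !gsum_plus, sqnormC_split. fold d1 d2.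
    unfold sqnormR in *. pose proof (pow2_ge_0 be). nra.
Qed.

End SchrodingerOperator.

Lemma schr_solvable K dx a E0 P : (0 < K)%nat ->
  periodicC K E0 -> periodicR K P -> exists E1, periodicC K E1 /\ schr_rel dx a E0 P E1.
Proof.
  intros HK HE HP.
  set (T := schr_op (a / dx ^ 2) a P).
  destruct (monotone_lipschitz_solvable K T (csub E0 (T E0))
              (32 * (a / dx ^ 2) ^ 2 + 2 * a ^ 2 * sqnormR K P)) as [E1 [HE1 Hsol]].
  - exact HK.
  - pose proof (sqnormR_nonneg K P). pose proof (pow2_ge_0 (a / dx ^ 2)).
    pose proof (pow2_ge_0 a). nra.
  - apply periodicC_csub, schr_op_periodic; assumption.
  - apply schr_op_periodic; assumption.
  - intros u v Hu Hv. unfold T. rewrite schr_op_skew by assumption. lra.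
  - apply schr_op_lipschitz; assumption.
  - exists E1. split; [exact HE1|]. intros k. destruct (Hsol k) as [H1 H2].
    unfold csub, T, schr_op in H1, H2; cbn [fst snd] in H1, H2.
    rewrite <- !lap_plus. split; nra.
Qed.

Section WaveOperator.

Variables (K : nat) (ga : R).
Hypothesis Hga : 0 <= ga.

Definition wave_op (w : Z -> C) (k : Z) : C :=
  (- ga * lap (fun j => fst (w j)) k, - ga * lap (fun j => snd (w j)) k).

Lemma wave_op_periodic w : periodicC K w -> periodicC K (wave_op w).
Proof.
  intros Hw k. unfold wave_op.
  rewrite (periodicR_lap K (fun j => snd (w j))), (periodicR_lap K (fun j => fst (w j)))
    by solve_periodic.
  reflexivity.
Qed.

Lemma wave_op_csub u v k : csub (wave_op u) (wave_op v) k = wave_op (csub u v) k.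
Proof. unfold wave_op, csub; cbn [fst snd]. rewrite <- !lap_minus. f_equal; ring. Qed.

Lemma wave_op_monotone u v : periodicC K u -> periodicC K v ->
  0 <= dotC K (csub (wave_op u) (wave_op v)) (csub u v).
Proof.
  intros Hu Hv. set (d := csub u v).
  assert (Hd : periodicC K d) by (apply periodicC_csub; assumption).
  replace (dotC K (csub (wave_op u) (wave_op v)) d) with
    (- ga * (gsum K (fun k => lap (fun j => fst (d j)) k * fst (d k))
             + gsum K (fun k => lap (fun j => snd (d j)) k * snd (d k)))).
  - pose proof (sum_lap_mul_self_nonpos K (fun j => fst (d j)) ltac:(solve_periodic)).
    pose proof (sum_lap_mul_self_nonpos K (fun j => snd (d j)) ltac:(solve_periodic)).
    nra.
  - unfold dotC. rewrite <- gsum_plus, <- gsum_scal.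
    apply gsum_ext; intros k _. rewrite wave_op_csub. unfold wave_op; cbn [fst snd]. fold d. ring.
Qed.

Lemma wave_op_lipschitz u v : periodicC K u -> periodicC K v ->
  sqnormC K (csub (wave_op u) (wave_op v)) <= 16 * ga ^ 2 * sqnormC K (csub u v).
Proof.
  intros Hu Hv. set (d := csub u v).
  assert (Hd : periodicC K d) by (apply periodicC_csub; assumption).
  replace (sqnormC K (csub (wave_op u) (wave_op v))) with
    (ga ^ 2 * (sqnormR K (lap (fun j => fst (d j))) + sqnormR K (lap (fun j => snd (d j))))).
  - pose proof (sqnormR_lap_le K (fun j => fst (d j)) ltac:(solve_periodic)).
    pose proof (sqnormR_lap_le K (fun j => snd (d j)) ltac:(solve_periodic)).
    rewrite sqnormC_split. pose proof (pow2_ge_0 ga). nra.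
  - unfold sqnormC, sqnormR. rewrite <- gsum_plus, <- gsum_scal.
    apply gsum_ext; intros k _. rewrite wave_op_csub. unfold wave_op; cbn [fst snd]. fold d. ring.
Qed.

End WaveOperator.

Lemma wave_solvable K dx a N0 V0 W : (0 < K)%nat -> 0 < dx -> 0 <= a ->
  periodicR K N0 -> periodicR K V0 -> periodicR K W ->
  exists N1 V1, periodicR K N1 /\ periodicR K V1 /\ wave_rel dx a N0 V0 W N1 V1.
Proof.
  intros HK Hdx Ha HN HV HW.
  set (be := a / dx ^ 2).
  assert (Hga : 0 <= a * be)
    by (apply Rmult_le_pos; [lra | apply Rdiv_le_0_compat; [lra | apply pow_lt; lra]]).
  set (G := fun j => 2 * V0 j + a * N0 j + a * W j).
  assert (HG : periodicR K G) by (unfold G; solve_periodic).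
  (* eliminating [V1] leaves [N1 - a be lap N1 = N0 + be lap G], solved in its complexification *)
  set (b := fun k => (N0 k + be * lap G k, 0) : C).
  destruct (monotone_lipschitz_solvable K (wave_op (a * be)) b (16 * (a * be) ^ 2))
    as [u [Hu Hsol]].
  - exact HK.
  - pose proof (pow2_ge_0 (a * be)). lra.
  - intros k. unfold b. rewrite HN, (periodicR_lap K G HG). reflexivity.
  - apply wave_op_periodic.
  - apply wave_op_monotone; assumption.
  - apply wave_op_lipschitz.
  - set (N1 := fun k => fst (u k)).
    set (V1 := fun k => V0 k + a * (N1 k + N0 k) + a * W k).
    assert (HN1 : periodicR K N1) by (unfold N1; solve_periodic).
    exists N1, V1. split; [exact HN1|]. split; [unfold V1; solve_periodic|].
    intros k. split; [|unfold V1; ring].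
    destruct (Hsol k) as [H1 _]. unfold wave_op, b in H1; cbn [fst snd] in H1.
    fold N1 in H1.
    replace (lap (fun j => V1 j + V0 j) k) with (lap G k + a * lap N1 k)
      by (unfold V1, G, lap; ring).
    change (fst (u k)) with (N1 k) in H1. fold be. nra.
Qed.

(** * Stability estimates for one step *)

Lemma schr_mass_conserved K dx a E0 P E1 : periodicC K E0 -> periodicC K E1 ->
  schr_rel dx a E0 P E1 -> sqnormC K E1 = sqnormC K E0.
Proof.
  intros HE HE1 H.
  set (s1 := fun j => fst (E1 j) + fst (E0 j)).
  set (s2 := fun j => snd (E1 j) + snd (E0 j)).
  assert (E : sqnormC K E1 - sqnormC K E0 =
     (a / dx ^ 2) * (gsum K (fun k => lap s1 k * s2 k) - gsum K (fun k => lap s2 k * s1 k))).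
  { unfold sqnormC. rewrite <- !gsum_minus, <- gsum_scal.
    apply gsum_ext. intros k _. destruct (H k) as [H1 H2].
    replace (fst (E1 k) ^ 2 + snd (E1 k) ^ 2 - (fst (E0 k) ^ 2 + snd (E0 k) ^ 2))
      with ((fst (E1 k) - fst (E0 k)) * s1 k + (snd (E1 k) - snd (E0 k)) * s2 k)
      by (unfold s1, s2; ring).
    rewrite H1, H2. fold s1 s2. unfold s1, s2. ring. }
  rewrite (sum_lap_mul_comm K s1 s2) in E by (unfold s1, s2; solve_periodic). lra.
Qed.

Lemma wave_lipschitz K dx a N0 V0 W W' N1 V1 N1' V1' : 0 < dx -> 0 <= a ->
  periodicR K W -> periodicR K W' -> periodicR K N1 -> periodicR K V1 ->
  periodicR K N1' -> periodicR K V1' ->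
  wave_rel dx a N0 V0 W N1 V1 -> wave_rel dx a N0 V0 W' N1' V1' ->
  sqnormR K (fun k => N1 k - N1' k) <= (a / dx) ^ 2 * sqnormR K (fun k => W k - W' k).
Proof.
  intros Hdx Ha HW HW' HN1 HV1 HN1' HV1' H H'.
  set (be := a / dx ^ 2).
  set (n := fun k => N1 k - N1' k). set (v := fun k => V1 k - V1' k).
  set (om := fun k => W k - W' k).
  assert (Hn : periodicR K n) by (unfold n; solve_periodic).
  assert (Hv : periodicR K v) by (unfold v; solve_periodic).
  assert (Hom : periodicR K om) by (unfold om; solve_periodic).
  assert (En : forall k, n k = be * lap v k).
  { intros k. destruct (H k) as [H1 _], (H' k) as [H1' _].
    replace (lap v k) with (lap (fun j => V1 j + V0 j) k - lap (fun j => V1' j + V0 j) k)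
      by (unfold v, lap; ring).
    unfold n. rewrite Rmult_minus_distr_l. fold be in H1, H1'. lra. }
  assert (Ev : forall k, v k = a * n k + a * om k).
  { intros k. destruct (H k) as [_ H2], (H' k) as [_ H2']. unfold v, n, om. lra. }
  assert (S1 : sqnormR K n = - (be * a) * gsum K (fun k => fwd n k ^ 2 + fwd om k * fwd n k)).
  { transitivity (be * gsum K (fun k => lap v k * n k)).
    - unfold sqnormR. rewrite <- gsum_scal. apply gsum_ext; intros k _.
      replace (n k ^ 2) with (n k * n k) by ring. rewrite (En k) at 1. ring.
    - rewrite sum_lap_mul, <- gsum_opp, <- !gsum_scal by assumption.
      apply gsum_ext; intros k _. unfold fwd. rewrite !Ev. ring. }
  assert (S2 : - gsum K (fun k => fwd n k ^ 2 + fwd om k * fwd n k)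
               <= / 4 * sqnormR K (fwd om)).
  { rewrite <- gsum_opp. unfold sqnormR. rewrite <- gsum_scal.
    apply gsum_le; intros k _. pose proof (pow2_ge_0 (fwd n k + fwd om k / 2)). nra. }
  pose proof (sqnormR_fwd_le K om Hom).
  assert (Hbe : 0 <= be * a)
    by (apply Rmult_le_pos; [apply Rdiv_le_0_compat; [lra | apply pow_lt; lra] | lra]).
  replace ((a / dx) ^ 2) with (be * a) by (unfold be; field; lra).
  fold n om. rewrite S1. nra.
Qed.

Lemma schr_rel_sub dx a E0 P P' E1 E1' k :
  schr_rel dx a E0 P E1 -> schr_rel dx a E0 P' E1' ->
  fst (E1 k) - fst (E1' k) =
    - (a / dx ^ 2 * lap (fun j => snd (E1 j) - snd (E1' j)) k)
    + a * P k * (snd (E1 k) - snd (E1' k)) + a * (P k - P' k) * (snd (E1' k) + snd (E0 k)) /\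
  snd (E1 k) - snd (E1' k) =
    a / dx ^ 2 * lap (fun j => fst (E1 j) - fst (E1' j)) k
    - a * P k * (fst (E1 k) - fst (E1' k)) - a * (P k - P' k) * (fst (E1' k) + fst (E0 k)).
Proof.
  intros H H'. destruct (H k) as [A1 A2], (H' k) as [B1 B2].
  replace (lap (fun j => snd (E1 j) - snd (E1' j)) k) with
    (lap (fun j => snd (E1 j) + snd (E0 j)) k - lap (fun j => snd (E1' j) + snd (E0 j)) k)
    by (unfold lap; ring).
  replace (lap (fun j => fst (E1 j) - fst (E1' j)) k) with
    (lap (fun j => fst (E1 j) + fst (E0 j)) k - lap (fun j => fst (E1' j) + fst (E0 j)) k)
    by (unfold lap; ring).
  split; nra.
Qed.

Lemma schr_lipschitz K dx a R2 E0 P P' E1 E1' : periodicC K E1 -> periodicC K E1' ->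
  (forall k, fst (E0 k) ^ 2 + snd (E0 k) ^ 2 <= R2) ->
  (forall k, fst (E1' k) ^ 2 + snd (E1' k) ^ 2 <= R2) ->
  schr_rel dx a E0 P E1 -> schr_rel dx a E0 P' E1' ->
  sqnormC K (csub E1 E1') <= 4 * a ^ 2 * R2 * sqnormR K (fun k => P k - P' k).
Proof.
  intros HE1 HE1' HR0 HR1 H H'.
  set (be := a / dx ^ 2).
  set (e1 := fun k => fst (E1 k) - fst (E1' k)). set (e2 := fun k => snd (E1 k) - snd (E1' k)).
  set (s1 := fun k => fst (E1' k) + fst (E0 k)). set (s2 := fun k => snd (E1' k) + snd (E0 k)).
  set (p := fun k => P k - P' k).
  assert (He : forall k, e1 k = - (be * lap e2 k) + a * P k * e2 k + a * p k * s2 k /\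
                         e2 k = be * lap e1 k - a * P k * e1 k - a * p k * s1 k)
    by (intros k; apply schr_rel_sub; assumption).
  (* the dispersive terms cancel by summation by parts, leaving the potential difference *)
  assert (Id : sqnormC K (csub E1 E1') = gsum K (fun k => a * p k * (s2 k * e1 k - s1 k * e2 k))).
  { transitivity (be * (gsum K (fun k => lap e1 k * e2 k) - gsum K (fun k => lap e2 k * e1 k))
                  + gsum K (fun k => a * p k * (s2 k * e1 k - s1 k * e2 k))).
    - unfold sqnormC. rewrite <- gsum_minus, <- gsum_scal, <- gsum_plus.
      apply gsum_ext; intros k _. unfold csub; cbn [fst snd]. fold (e1 k) (e2 k).
      destruct (He k) as [X1 X2].
      replace (e1 k ^ 2 + e2 k ^ 2) with (e1 k * e1 k + e2 k * e2 k) by ring.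
      rewrite X1 at 1. rewrite X2 at 2. ring.
    - rewrite (sum_lap_mul_comm K e1 e2) by (unfold e1, e2; solve_periodic). ring. }
  assert (Bd : gsum K (fun k => a * p k * (s2 k * e1 k - s1 k * e2 k)) <=
               / 2 * (4 * a ^ 2 * R2) * sqnormR K p + / 2 * sqnormC K (csub E1 E1')).
  { unfold sqnormR, sqnormC. rewrite <- !gsum_scal, <- gsum_plus.
    apply gsum_le; intros k _. unfold csub; cbn [fst snd]. fold (e1 k) (e2 k).
    set (t := a * p k).
    assert (Hs : s1 k ^ 2 + s2 k ^ 2 <= 4 * R2).
    { specialize (HR0 k); specialize (HR1 k). unfold s1, s2.
      pose proof (pow2_ge_0 (fst (E1' k) - fst (E0 k))).
      pose proof (pow2_ge_0 (snd (E1' k) - snd (E0 k))). nra. }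
    pose proof (pow2_ge_0 (t * s2 k - e1 k)). pose proof (pow2_ge_0 (t * s1 k + e2 k)).
    assert (t ^ 2 * (s1 k ^ 2 + s2 k ^ 2) <= t ^ 2 * (4 * R2))
      by (apply Rmult_le_compat_l; [apply pow2_ge_0 | exact Hs]).
    replace (/ 2 * (4 * a ^ 2 * R2) * p k ^ 2) with (/ 2 * (t ^ 2 * (4 * R2)))
      by (unfold t; ring).
    nra. }
  fold p. lra.
Qed.

Lemma Cmod_sq z : Cmod z ^ 2 = fst z ^ 2 + snd z ^ 2.
Proof. unfold Cmod. rewrite pow2_sqrt; [reflexivity|]. nra. Qed.

Lemma Cmod_reverse_triangle z z' : Rabs (Cmod z - Cmod z') <= Cmod (z - z').
Proof.
  pose proof (Cmod_triangle (z - z') z') as H1. pose proof (Cmod_triangle (z' - z) z) as H2.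
  replace (z - z' + z')%C with z in H1 by ring. replace (z' - z + z)%C with z' in H2 by ring.
  replace (z' - z)%C with (- (z - z'))%C in H2 by ring. rewrite Cmod_opp in H2.
  apply Rabs_le. lra.
Qed.

(* |z|^2 with |z| capped at sqrt R2: globally Lipschitz, and equal to |z|^2 on every
   solution of the Schroedinger half-step, whose mass is R2. *)
Definition trunc_intensity (R2 : R) (z : C) : R := Rmin (Cmod z) (sqrt R2) ^ 2.

Lemma trunc_intensity_eq R2 z : fst z ^ 2 + snd z ^ 2 <= R2 ->
  trunc_intensity R2 z = Cmod z ^ 2.
Proof.
  intros H. unfold trunc_intensity. rewrite Rmin_left; [reflexivity|].
  apply sqrt_le_1_alt. exact H.
Qed.

Lemma trunc_intensity_lipschitz R2 z z' : 0 <= R2 ->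
  (trunc_intensity R2 z - trunc_intensity R2 z') ^ 2
  <= 4 * R2 * ((fst z - fst z') ^ 2 + (snd z - snd z') ^ 2).
Proof.
  intros HR. unfold trunc_intensity.
  set (m := Rmin (Cmod z) (sqrt R2)). set (m' := Rmin (Cmod z') (sqrt R2)).
  assert (Hm : 0 <= m <= sqrt R2)
    by (split; [apply Rmin_glb; [apply Cmod_ge_0 | apply sqrt_pos] | apply Rmin_r]).
  assert (Hm' : 0 <= m' <= sqrt R2)
    by (split; [apply Rmin_glb; [apply Cmod_ge_0 | apply sqrt_pos] | apply Rmin_r]).
  assert (Hdiff : Rabs (m - m') <= Cmod (z - z')).
  { eapply Rle_trans; [|apply Cmod_reverse_triangle]. unfold m, m', Rmin.
    destruct (Rle_dec (Cmod z) (sqrt R2)), (Rle_dec (Cmod z') (sqrt R2));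
      unfold Rabs; repeat destruct Rcase_abs; lra. }
  apply sq_le_of_Rabs_le in Hdiff. rewrite Cmod_sq in Hdiff.
  replace (fst (z - z')%C) with (fst z - fst z') in Hdiff by (simpl; ring).
  replace (snd (z - z')%C) with (snd z - snd z') in Hdiff by (simpl; ring).
  assert (Hsum : (m + m') ^ 2 <= 4 * R2).
  { replace (4 * R2) with ((2 * sqrt R2) ^ 2) by (rewrite Rpow_mult_distr, pow2_sqrt; lra).
    apply pow_incr. lra. }
  replace ((m ^ 2 - m' ^ 2) ^ 2) with ((m - m') ^ 2 * (m + m') ^ 2) by ring.
  rewrite Rmult_comm.
  apply Rmult_le_compat; [apply pow2_ge_0 | apply pow2_ge_0 | exact Hsum | exact Hdiff].
Qed.

Definition wave_source (R2 : R) (E0 u : Z -> C) (k : Z) : R :=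
  trunc_intensity R2 (u k) + Cmod (E0 k) ^ 2.

Lemma wave_source_periodic K R2 E0 u : periodicC K E0 -> periodicC K u ->
  periodicR K (wave_source R2 E0 u).
Proof. intros HE Hu. unfold wave_source. solve_periodic. Qed.

Lemma wave_source_lipschitz K R2 E0 u u' : 0 <= R2 ->
  sqnormR K (fun k => wave_source R2 E0 u k - wave_source R2 E0 u' k)
  <= 4 * R2 * sqnormC K (csub u u').
Proof.
  intros HR. unfold sqnormR, sqnormC. rewrite <- gsum_scal.
  apply gsum_le; intros k _. unfold wave_source, csub; cbn [fst snd].
  replace (trunc_intensity R2 (u k) + Cmod (E0 k) ^ 2
           - (trunc_intensity R2 (u' k) + Cmod (E0 k) ^ 2))
    with (trunc_intensity R2 (u k) - trunc_intensity R2 (u' k)) by ring.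
  apply trunc_intensity_lipschitz, HR.
Qed.

Lemma step_contraction K dx a E0 N0 V0 u u' N1 V1 N1' V1' E1 E1' :
  (0 < K)%nat -> 0 < dx -> 0 <= a ->
  periodicC K E0 -> periodicC K u -> periodicC K u' -> periodicC K E1 -> periodicC K E1' ->
  periodicR K N1 -> periodicR K V1 -> periodicR K N1' -> periodicR K V1' ->
  let R2 := sqnormC K E0 in
  wave_rel dx a N0 V0 (wave_source R2 E0 u) N1 V1 ->
  wave_rel dx a N0 V0 (wave_source R2 E0 u') N1' V1' ->
  schr_rel dx a E0 (fun k => (N1 k + N0 k) / 2) E1 ->
  schr_rel dx a E0 (fun k => (N1' k + N0 k) / 2) E1' ->
  sqnormC K (csub E1 E1') <= (2 * a ^ 2 * R2 / dx) ^ 2 * sqnormC K (csub u u').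
Proof.
  intros HK Hdx Ha HE Hu Hu' HE1 HE1' HN1 HV1 HN1' HV1' R2 HW HW' HS HS'.
  assert (HR2 : 0 <= R2) by apply sqnormC_nonneg.
  assert (HR1' : forall k, fst (E1' k) ^ 2 + snd (E1' k) ^ 2 <= R2).
  { intros k. unfold R2. rewrite <- (schr_mass_conserved K dx a E0 _ E1' HE HE1' HS').
    apply csq_le_sqnormC; assumption. }
  pose proof (schr_lipschitz K dx a R2 E0 _ _ E1 E1' HE1 HE1'
                (csq_le_sqnormC K E0 HK HE) HR1' HS HS') as Hschr.
  cbv beta in Hschr.
  pose proof (wave_lipschitz K dx a N0 V0 _ _ N1 V1 N1' V1' Hdx Ha
                (wave_source_periodic K R2 E0 u HE Hu) (wave_source_periodic K R2 E0 u' HE Hu')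
                HN1 HV1 HN1' HV1' HW HW') as Hwave.
  pose proof (wave_source_lipschitz K R2 E0 u u' HR2) as Hsrc.
  replace (sqnormR K (fun k => (N1 k + N0 k) / 2 - (N1' k + N0 k) / 2))
    with (/ 4 * sqnormR K (fun k => N1 k - N1' k)) in Hschr
    by (unfold sqnormR; rewrite <- gsum_scal; apply gsum_ext; intros; field).
  replace ((2 * a ^ 2 * R2 / dx) ^ 2) with (a ^ 2 * R2 * ((a / dx) ^ 2 * (4 * R2)))
    by (field; lra).
  assert (Ha2 : 0 <= a ^ 2 * R2) by (apply Rmult_le_pos; [apply pow2_ge_0 | exact HR2]).
  eapply Rle_trans; [exact Hschr|].
  replace (4 * a ^ 2 * R2 * (/ 4 * sqnormR K (fun k => N1 k - N1' k)))
    with (a ^ 2 * R2 * sqnormR K (fun k => N1 k - N1' k)) by field.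
  rewrite (Rmult_assoc (a ^ 2 * R2)). apply Rmult_le_compat_l; [exact Ha2|].
  eapply Rle_trans; [exact Hwave|].
  rewrite (Rmult_assoc ((a / dx) ^ 2)). apply Rmult_le_compat_l; [apply pow2_ge_0 | exact Hsrc].
Qed.

Lemma C_eq_iff (z w : C) : z = w <-> fst z = fst w /\ snd z = snd w.
Proof.
  destruct z, w; simpl. split; [intros H; injection H; auto | intros [-> ->]; reflexivity].
Qed.

Lemma div_eq_iff x d y : d <> 0 -> x / d = y <-> x = d * y.
Proof.
  intros Hd. split; intros H.
  - rewrite <- H. field. exact Hd.
  - rewrite H. field. exact Hd.
Qed.

Lemma schr_pointwise_iff dx dt (E0 E1 : Z -> C) (P : Z -> R) k : 0 < dx -> 0 < dt ->
  (Ci * ((E1 k - E0 k) / RtoC dt) =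
     - dx2C dx (fun j => ((E1 j + E0 j) / RtoC 2)%C) k
     + RtoC (P k) * ((E1 k + E0 k) / RtoC 2))%C <->
  (fst (E1 k) - fst (E0 k) = - (dt / 2 / dx ^ 2) * lap (fun j => snd (E1 j) + snd (E0 j)) k
                             + dt / 2 * P k * (snd (E1 k) + snd (E0 k)) /\
   snd (E1 k) - snd (E0 k) = dt / 2 / dx ^ 2 * lap (fun j => fst (E1 j) + fst (E0 j)) k
                             - dt / 2 * P k * (fst (E1 k) + fst (E0 k))).
Proof.
  intros Hdx Hdt. rewrite C_eq_iff.
  assert (Hdx2 : dx ^ 2 <> 0) by (apply pow_nonzero; lra).
  set (L1 := lap (fun j => fst (E1 j) + fst (E0 j)) k).
  set (L2 := lap (fun j => snd (E1 j) + snd (E0 j)) k).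
  replace (fst (Ci * ((E1 k - E0 k) / RtoC dt))%C) with (- (snd (E1 k) - snd (E0 k)) / dt)
    by (unfold Ci, RtoC, Cdiv, Cinv, Cmult, Cminus, Cplus, Copp; cbn [fst snd]; field; lra).
  replace (snd (Ci * ((E1 k - E0 k) / RtoC dt))%C) with ((fst (E1 k) - fst (E0 k)) / dt)
    by (unfold Ci, RtoC, Cdiv, Cinv, Cmult, Cminus, Cplus, Copp; cbn [fst snd]; field; lra).
  replace (fst (- dx2C dx (fun j => ((E1 j + E0 j) / RtoC 2)%C) k
                + RtoC (P k) * ((E1 k + E0 k) / RtoC 2))%C)
    with (/ dt * (- (dt / 2 / dx ^ 2) * L1 + dt / 2 * P k * (fst (E1 k) + fst (E0 k))))
    by (unfold L1, dx2C, lap, RtoC, Cdiv, Cinv, Cmult, Cminus, Cplus, Copp; cbn [fst snd];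
        field; lra).
  replace (snd (- dx2C dx (fun j => ((E1 j + E0 j) / RtoC 2)%C) k
                + RtoC (P k) * ((E1 k + E0 k) / RtoC 2))%C)
    with (/ dt * (- (dt / 2 / dx ^ 2) * L2 + dt / 2 * P k * (snd (E1 k) + snd (E0 k))))
    by (unfold L2, dx2C, lap, RtoC, Cdiv, Cinv, Cmult, Cminus, Cplus, Copp; cbn [fst snd];
        field; lra).
  rewrite !div_eq_iff, <- !Rmult_assoc, Rinv_r, !Rmult_1_l by lra.
  split; intros [H1 H2]; split; lra.
Qed.

Lemma wave_pointwise_iff dx dt (N0 N1 V0 V1 : Z -> R) w k : 0 < dx -> 0 < dt ->
  ((N1 k - N0 k) / dt = dx2R dx (fun j => (V1 j + V0 j) / 2) k /\
   (V1 k - V0 k) / dt = (N1 k + N0 k) / 2 + w / 2) <->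
  (N1 k - N0 k = dt / 2 / dx ^ 2 * lap (fun j => V1 j + V0 j) k /\
   V1 k - V0 k = dt / 2 * (N1 k + N0 k) + dt / 2 * w).
Proof.
  intros Hdx Hdt.
  assert (Hdx2 : dx ^ 2 <> 0) by (apply pow_nonzero; lra).
  replace (dx2R dx (fun j => (V1 j + V0 j) / 2) k)
    with (lap (fun j => V1 j + V0 j) k / (2 * dx ^ 2)) by (unfold dx2R, lap; field; lra).
  rewrite !div_eq_iff by lra.
  split; intros [H1 H2]; split; [rewrite H1 | rewrite H2 | rewrite H1 | rewrite H2]; field; lra.
Qed.

(* One step of the scheme is [dvdm_step] at level 0 of a two-level sequence. *)
Definition two_levels {A} (x0 x1 : A) (j : nat) : A :=
  match j with O => x0 | S _ => x1 end.

Lemma dvdm_step_two_levels_iff dx dt E0 E1 N0 N1 V0 V1 : 0 < dx -> 0 < dt ->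
  (forall k, dvdm_step dx dt (two_levels E0 E1) (two_levels N0 N1) (two_levels V0 V1) 0 k) <->
  schr_rel dx (dt / 2) E0 (fun k => (N1 k + N0 k) / 2) E1 /\
  wave_rel dx (dt / 2) N0 V0 (fun k => Cmod (E1 k) ^ 2 + Cmod (E0 k) ^ 2) N1 V1.
Proof.
  intros Hdx Hdt. unfold dvdm_step, schr_rel, wave_rel; cbn zeta beta iota delta [two_levels].
  split.
  - intros H. split; intros k; destruct (H k) as [HE HNV].
    + apply (schr_pointwise_iff dx dt E0 E1 (fun k => (N1 k + N0 k) / 2) k Hdx Hdt), HE.
    + apply (wave_pointwise_iff dx dt N0 N1 V0 V1 _ k Hdx Hdt), HNV.
  - intros [HS HW] k. split.
    + apply (schr_pointwise_iff dx dt E0 E1 (fun k => (N1 k + N0 k) / 2) k Hdx Hdt), HS.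
    + apply (wave_pointwise_iff dx dt N0 N1 V0 V1 _ k Hdx Hdt), HW.
Qed.

Lemma choice_on {A B} (P : A -> Prop) (Q : A -> B -> Prop) : inhabited B ->
  (forall x, P x -> exists y, Q x y) -> exists f : A -> B, forall x, P x -> Q x (f x).
Proof.
  intros [b0] H.
  exists (fun x => match excluded_middle_informative (P x) with
                   | left Hx => proj1_sig (constructive_indefinite_description _ (H x Hx))
                   | right _ => b0
                   end).
  intros x Hx. destruct (excluded_middle_informative (P x)); [|contradiction].
  apply proj2_sig.
Qed.

Lemma wave_source_eq K R2 E0 u : (0 < K)%nat -> periodicC K u -> sqnormC K u <= R2 ->
  wave_source R2 E0 u = fun k => Cmod (u k) ^ 2 + Cmod (E0 k) ^ 2.
Proof.
  intros HK Hu HR. apply functional_extensionality; intros k. unfold wave_source.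
  rewrite trunc_intensity_eq; [reflexivity|].
  pose proof (csq_le_sqnormC K u HK Hu k). lra.
Qed.

Definition scheme_step (K : nat) (dx dt : R) (E0 : Z -> C) (N0 V0 : Z -> R)
  (E1 : Z -> C) (N1 V1 : Z -> R) : Prop :=
  periodicC K E1 /\ periodicR K N1 /\ periodicR K V1 /\
  forall k, dvdm_step dx dt (two_levels E0 E1) (two_levels N0 N1) (two_levels V0 V1) 0 k.

Section OneStep.

Variables (K : nat) (dx dt : R) (E0 : Z -> C) (N0 V0 : Z -> R).
Hypotheses (HK : (0 < K)%nat) (Hdx : 0 < dx) (Hdt : 0 < dt).
Hypotheses (HE0 : periodicC K E0) (HN0 : periodicR K N0) (HV0 : periodicR K V0).
Hypothesis Hsmall : dt ^ 2 * sqnormC K E0 < 2 * dx.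

Let a := dt / 2.
Let R2 := sqnormC K E0.
Let c := 2 * a ^ 2 * R2 / dx.

Let c_range : 0 <= c < 1.
Proof.
  assert (0 <= R2) by apply sqnormC_nonneg.
  unfold c, a. split.
  - apply Rdiv_le_0_compat; [|lra]. pose proof (pow2_ge_0 (dt / 2)). nra.
  - apply Rmult_lt_reg_r with dx; [lra|]. unfold Rdiv. rewrite Rmult_assoc, Rinv_l by lra.
    fold R2 in Hsmall. nra.
Qed.

Lemma scheme_step_exists : exists E1 N1 V1, scheme_step K dx dt E0 N0 V0 E1 N1 V1.
Proof.
  assert (Ha : 0 <= a) by (unfold a; lra).
  destruct (choice_on (periodicC K)
    (fun u NV => periodicR K (fst NV) /\ periodicR K (snd NV) /\
       wave_rel dx a N0 V0 (wave_source R2 E0 u) (fst NV) (snd NV)))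
    as [wave Hwave].
  { exact (inhabits (N0, V0)). }
  { intros u Hu. destruct (wave_solvable K dx a N0 V0 (wave_source R2 E0 u))
      as [N1 [V1 H]]; try assumption.
    - apply wave_source_periodic; assumption.
    - exists (N1, V1). exact H. }
  destruct (choice_on (periodicR K)
    (fun P E1 => periodicC K E1 /\ schr_rel dx a E0 P E1)) as [schr Hschr].
  { exact (inhabits E0). }
  { intros P HP. apply schr_solvable; assumption. }
  set (Phi := fun u => schr (fun k => (fst (wave u) k + N0 k) / 2)).
  assert (HPhi : forall u, periodicC K u -> periodicC K (Phi u) /\
            schr_rel dx a E0 (fun k => (fst (wave u) k + N0 k) / 2) (Phi u)).
  { intros u Hu. apply Hschr. destruct (Hwave u Hu) as [HN _]. solve_periodic. }
  destruct (contraction_fixpoint K HK Phi c c_range) as [u [Hu Hfix]].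
  - intros u Hu. apply HPhi, Hu.
  - intros u v Hu Hv.
    destruct (Hwave u Hu) as [HNu [HVu HWu]], (Hwave v Hv) as [HNv [HVv HWv]].
    destruct (HPhi u Hu) as [HEu HSu], (HPhi v Hv) as [HEv HSv].
    exact (step_contraction K dx a E0 N0 V0 u v _ _ _ _ _ _ HK Hdx Ha HE0 Hu Hv HEu HEv
             HNu HVu HNv HVv HWu HWv HSu HSv).
  - assert (Efix : Phi u = u) by (apply functional_extensionality; exact Hfix).
    destruct (Hwave u Hu) as [HN1 [HV1 HW]]. destruct (HPhi u Hu) as [_ HS].
    rewrite Efix in HS.
    exists u, (fst (wave u)), (snd (wave u)).
    split; [exact Hu|]. split; [exact HN1|]. split; [exact HV1|].
    apply dvdm_step_two_levels_iff; [exact Hdx | exact Hdt|]. split; [exact HS|].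
    rewrite <- (wave_source_eq K R2 E0 u HK Hu); [exact HW|].
    rewrite (schr_mass_conserved K dx a E0 _ u HE0 Hu HS). apply Rle_refl.
Qed.

Lemma scheme_step_unique E1 N1 V1 E1' N1' V1' :
  scheme_step K dx dt E0 N0 V0 E1 N1 V1 -> scheme_step K dx dt E0 N0 V0 E1' N1' V1' ->
  E1 = E1' /\ N1 = N1' /\ V1 = V1'.
Proof.
  intros [HE1 [HN1 [HV1 H]]] [HE1' [HN1' [HV1' H']]].
  assert (Ha : 0 <= a) by (unfold a; lra).
  apply dvdm_step_two_levels_iff in H as [HS HW]; [|exact Hdx | exact Hdt].
  apply dvdm_step_two_levels_iff in H' as [HS' HW']; [|exact Hdx | exact Hdt].
  fold a in HS, HW, HS', HW'.
  pose proof (schr_mass_conserved K dx a E0 _ _ HE0 HE1 HS) as HM.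
  pose proof (schr_mass_conserved K dx a E0 _ _ HE0 HE1' HS') as HM'.
  rewrite <- (wave_source_eq K R2 E0 E1 HK HE1) in HW by (rewrite HM; apply Rle_refl).
  rewrite <- (wave_source_eq K R2 E0 E1' HK HE1') in HW' by (rewrite HM'; apply Rle_refl).
  assert (HEE : E1 = E1').
  { pose proof (step_contraction K dx a E0 N0 V0 E1 E1' _ _ _ _ _ _ HK Hdx Ha HE0 HE1 HE1'
                  HE1 HE1' HN1 HV1 HN1' HV1' HW HW' HS HS') as Hc.
    fold R2 c in Hc.
    apply functional_extensionality, (sqnormC_csub_eq0 K _ _ HK HE1 HE1').
    pose proof (sqnormC_nonneg K (csub E1 E1')). pose proof c_range.
    assert (c ^ 2 < 1) by (simpl; nra). nra. }
  subst E1'.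
  assert (HNN : N1 = N1').
  { apply functional_extensionality; intros k.
    apply Rminus_diag_uniq. revert k.
    apply (sqnormR_eq0 K _ HK); [solve_periodic|].
    pose proof (wave_lipschitz K dx a N0 V0 _ _ N1 V1 N1' V1' Hdx Ha
                  (wave_source_periodic K R2 E0 E1 HE0 HE1)
                  (wave_source_periodic K R2 E0 E1 HE0 HE1)
                  HN1 HV1 HN1' HV1' HW HW') as Hw.
    replace (sqnormR K (fun k => wave_source R2 E0 E1 k - wave_source R2 E0 E1 k)) with 0
      in Hw by (unfold sqnormR; rewrite <- (Rmult_0_r (INR K)), <- gsum_const;
                apply gsum_ext; intros; ring).
    lra. }
  subst N1'. split; [reflexivity|]. split; [reflexivity|].
  apply functional_extensionality; intros k.
  destruct (HW k) as [_ H1], (HW' k) as [_ H2]. lra.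
Qed.

End OneStep.

Lemma dvdm_solution_le K dx dt E0 N0 V0 m m' Ed Nd Vd : (m' <= m)%nat ->
  dvdm_solution K dx dt E0 N0 V0 m Ed Nd Vd -> dvdm_solution K dx dt E0 N0 V0 m' Ed Nd Vd.
Proof.
  intros Hle [Hper [Hinit Hstep]]. split; [|split]; [| exact Hinit |].
  - intros j Hj. apply Hper. lia.
  - intros j k Hj. apply Hstep. lia.
Qed.

Lemma dvdm_solution_scheme_step K dx dt E0 N0 V0 m Ed Nd Vd j :
  dvdm_solution K dx dt E0 N0 V0 m Ed Nd Vd -> (j < m)%nat ->
  scheme_step K dx dt (Ed j) (Nd j) (Vd j) (Ed (S j)) (Nd (S j)) (Vd (S j)).
Proof.
  intros [Hper [_ Hstep]] Hj. destruct (Hper (S j) Hj) as [HE [HN HV]].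
  split; [exact HE|]. split; [exact HN|]. split; [exact HV|].
  intros k. exact (Hstep j k Hj).
Qed.

Lemma dvdm_step_congr dx dt E N V E' N' V' m m' k :
  E m = E' m' -> E (S m) = E' (S m') -> N m = N' m' -> N (S m) = N' (S m') ->
  V m = V' m' -> V (S m) = V' (S m') ->
  dvdm_step dx dt E N V m k -> dvdm_step dx dt E' N' V' m' k.
Proof.
  intros HE HE' HN HN' HV HV'. unfold dvdm_step.
  rewrite <- HE, <- HE', <- HN, <- HN', <- HV, <- HV'. exact (fun H => H).
Qed.

Definition extend_at {A} (m : nat) (x : nat -> A) (y : A) (j : nat) : A :=
  if (j <=? m)%nat then x j else y.

Lemma dvdm_solution_extend K dx dt E0 N0 V0 m Ed Nd Vd E1 N1 V1 :
  dvdm_solution K dx dt E0 N0 V0 m Ed Nd Vd ->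
  scheme_step K dx dt (Ed m) (Nd m) (Vd m) E1 N1 V1 ->
  dvdm_solution K dx dt E0 N0 V0 (S m)
    (extend_at m Ed E1) (extend_at m Nd N1) (extend_at m Vd V1).
Proof.
  intros [Hper [Hinit Hstep]] [HE1 [HN1 [HV1 H1]]]. unfold extend_at.
  split; [|split].
  - intros j Hj. destruct (Nat.leb_spec j m); [apply Hper; lia | auto].
  - exact Hinit.
  - intros j k Hj. assert (Hjm : (j <=? m)%nat = true) by (apply Nat.leb_le; lia).
    destruct (Nat.eq_dec j m) as [->|Hne].
    + assert (Hm : (S m <=? m)%nat = false) by (apply Nat.leb_gt; lia).
      refine (dvdm_step_congr _ _ _ _ _ _ _ _ 0 _ _ _ _ _ _ _ _ (H1 k));
        cbn [two_levels]; rewrite ?Hjm, ?Hm; reflexivity.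
    + assert (HSj : (S j <=? m)%nat = true) by (apply Nat.leb_le; lia).
      refine (dvdm_step_congr _ _ _ _ _ _ _ _ j _ _ _ _ _ _ _ _ (Hstep j k ltac:(lia)));
        rewrite ?Hjm, ?HSj; reflexivity.
Qed.

Section MultiStep.

Variables (K : nat) (dx dt : R) (E0 : Z -> C) (N0 V0 : Z -> R) (M : nat).
Hypotheses (HE0 : periodicC K E0) (HN0 : periodicR K N0) (HV0 : periodicR K V0).
Hypothesis step_exists : forall m Ed Nd Vd, (m < M)%nat ->
  dvdm_solution K dx dt E0 N0 V0 m Ed Nd Vd ->
  exists E1 N1 V1, scheme_step K dx dt (Ed m) (Nd m) (Vd m) E1 N1 V1.
Hypothesis step_unique : forall m Ed Nd Vd, (m < M)%nat ->
  dvdm_solution K dx dt E0 N0 V0 m Ed Nd Vd ->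
  forall E1 N1 V1 E1' N1' V1',
  scheme_step K dx dt (Ed m) (Nd m) (Vd m) E1 N1 V1 ->
  scheme_step K dx dt (Ed m) (Nd m) (Vd m) E1' N1' V1' ->
  E1 = E1' /\ N1 = N1' /\ V1 = V1'.

Lemma dvdm_solution_exists : exists Ed Nd Vd, dvdm_solution K dx dt E0 N0 V0 M Ed Nd Vd.
Proof.
  enough (H : forall m, (m <= M)%nat -> exists Ed Nd Vd, dvdm_solution K dx dt E0 N0 V0 m Ed Nd Vd)
    by exact (H M (le_n M)).
  induction m as [|m IH]; intros Hm.
  - exists (fun _ => E0), (fun _ => N0), (fun _ => V0).
    split; [|split]; [intros; auto | intros; auto | intros; lia].
  - destruct (IH ltac:(lia)) as [Ed [Nd [Vd Hsol]]].
    destruct (step_exists m Ed Nd Vd ltac:(lia) Hsol) as [E1 [N1 [V1 Hstep]]].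
    eexists _, _, _. exact (dvdm_solution_extend _ _ _ _ _ _ _ _ _ _ _ _ _ Hsol Hstep).
Qed.

Lemma dvdm_solution_unique Ed Nd Vd Ed' Nd' Vd' :
  dvdm_solution K dx dt E0 N0 V0 M Ed Nd Vd ->
  dvdm_solution K dx dt E0 N0 V0 M Ed' Nd' Vd' ->
  forall j, (j <= M)%nat -> Ed' j = Ed j /\ Nd' j = Nd j /\ Vd' j = Vd j.
Proof.
  intros Hsol Hsol'. induction j as [|j IH]; intros Hj.
  - destruct Hsol as [_ [Hinit _]], Hsol' as [_ [Hinit' _]].
    split; [|split]; apply functional_extensionality; intros k;
      destruct (Hinit k) as [? [? ?]], (Hinit' k) as [? [? ?]]; congruence.
  - destruct (IH ltac:(lia)) as [HE [HN HV]].
    pose proof (dvdm_solution_scheme_step _ _ _ _ _ _ _ _ _ _ j Hsol ltac:(lia)) as Hstep.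
    pose proof (dvdm_solution_scheme_step _ _ _ _ _ _ _ _ _ _ j Hsol' ltac:(lia)) as Hstep'.
    rewrite HE, HN, HV in Hstep'.
    destruct (step_unique j Ed Nd Vd ltac:(lia) (dvdm_solution_le _ _ _ _ _ _ M j _ _ _
                ltac:(lia) Hsol) _ _ _ _ _ _ Hstep Hstep') as [? [? ?]].
    auto.
Qed.

End MultiStep.

Lemma dvdm_wellposed K dx dt E0 N0 V0 M : (0 < K)%nat -> 0 < dx -> 0 < dt ->
  periodicC K E0 -> periodicR K N0 -> periodicR K V0 ->
  (forall m Ed Nd Vd, (m < M)%nat -> dvdm_solution K dx dt E0 N0 V0 m Ed Nd Vd ->
     dt ^ 2 * sqnormC K (Ed m) < 2 * dx) ->
  exists Ed Nd Vd, dvdm_solution K dx dt E0 N0 V0 M Ed Nd Vd /\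
    forall Ed' Nd' Vd', dvdm_solution K dx dt E0 N0 V0 M Ed' Nd' Vd' ->
    forall j k, (j <= M)%nat -> Ed' j k = Ed j k /\ Nd' j k = Nd j k /\ Vd' j k = Vd j k.
Proof.
  intros HK Hdx Hdt HE0 HN0 HV0 Hsmall.
  assert (Hstart : forall m Ed Nd Vd, (m < M)%nat -> dvdm_solution K dx dt E0 N0 V0 m Ed Nd Vd ->
            periodicC K (Ed m) /\ periodicR K (Nd m) /\ periodicR K (Vd m))
    by (intros m Ed Nd Vd _ [Hper _]; apply Hper, le_n).
  assert (Hex : forall m Ed Nd Vd, (m < M)%nat -> dvdm_solution K dx dt E0 N0 V0 m Ed Nd Vd ->
            exists E1 N1 V1, scheme_step K dx dt (Ed m) (Nd m) (Vd m) E1 N1 V1).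
  { intros m Ed Nd Vd Hm Hsol. destruct (Hstart m Ed Nd Vd Hm Hsol) as [? [? ?]].
    apply scheme_step_exists; eauto. }
  assert (Huniq : forall m Ed Nd Vd, (m < M)%nat -> dvdm_solution K dx dt E0 N0 V0 m Ed Nd Vd ->
            forall E1 N1 V1 E1' N1' V1',
            scheme_step K dx dt (Ed m) (Nd m) (Vd m) E1 N1 V1 ->
            scheme_step K dx dt (Ed m) (Nd m) (Vd m) E1' N1' V1' ->
            E1 = E1' /\ N1 = N1' /\ V1 = V1').
  { intros m Ed Nd Vd Hm Hsol. destruct (Hstart m Ed Nd Vd Hm Hsol) as [? [? ?]].
    apply scheme_step_unique; eauto. }
  destruct (dvdm_solution_exists K dx dt E0 N0 V0 M HE0 HN0 HV0 Hex) as [Ed [Nd [Vd Hsol]]].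
  exists Ed, Nd, Vd. split; [exact Hsol|].
  intros Ed' Nd' Vd' Hsol' j k Hj.
  destruct (dvdm_solution_unique K dx dt E0 N0 V0 M Huniq Ed Nd Vd Ed' Nd' Vd' Hsol Hsol' j Hj)
    as [-> [-> ->]].
  auto.
Qed.

Lemma zakharov_grid_periodic L T E N V K : 0 < L -> 0 <= T -> (0 < K)%nat ->
  zakharov_solution L T E N V ->
  periodicC K (fun k => E 0 (IZR k * (L / INR K))) /\
  periodicR K (fun k => N 0 (IZR k * (L / INR K))).
Proof.
  intros HL HT HK [Et [Ex [Exx [Nt [Vt [Vx [Vxx [Hs _]]]]]]]].
  assert (Hshift : forall k, IZR (k + Z.of_nat K) * (L / INR K) = IZR k * (L / INR K) + L).
  { intros k. rewrite plus_IZR, <- INR_IZR_INZ. field. apply not_0_INR. lia. }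
  split; intros k; rewrite Hshift;
    destruct (Hs 0 (IZR k * (L / INR K)) ltac:(lra))
      as (_ & _ & _ & _ & _ & _ & _ & _ & _ & _ & _ & _ & HE & HN & _); assumption.
Qed.

Lemma norm2C_sq K dx v : 0 <= dx -> norm2C K dx v ^ 2 = dx * sqnormC K v.
Proof.
  intros Hdx. unfold norm2C, sqnormC. rewrite pow2_sqrt.
  - rewrite <- gsum_scal. apply gsum_ext; intros k _. rewrite Cmod_sq. ring.
  - apply gsum_nonneg; intros k _. apply Rmult_le_pos; [apply pow2_ge_0 | exact Hdx].
Qed.

Lemma lt_dvdm_eps2 L dx dt p r : 0 < dx -> 0 < dt -> 0 <= p -> 0 < r ->
  dt < dvdm_eps2 L dx p r -> dt * r < dx.
Proof.
  intros Hdx Hdt Hp Hr H. unfold dvdm_eps2 in H.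
  set (D := 2 * p * Lhat L + 1 + (p + 1 / 2) * sqrt dx + (2 * p * Lhat L + 1 / 2) * dx) in H.
  assert (HD : 1 <= D).
  { assert (0 <= Lhat L).
    { unfold Lhat. apply Rmult_le_pos; [apply sqrt_pos|].
      apply Rle_trans with (sqrt L); [apply sqrt_pos | apply Rmax_l]. }
    assert (0 <= p * Lhat L) by (apply Rmult_le_pos; lra).
    assert (0 <= (p + 1 / 2) * sqrt dx) by (apply Rmult_le_pos; [lra | apply sqrt_pos]).
    assert (0 <= (2 * p * Lhat L + 1 / 2) * dx) by (apply Rmult_le_pos; lra).
    unfold D. lra. }
  apply (Rmult_lt_compat_r (r * D)) in H; [|nra].
  unfold Rdiv in H. rewrite Rmult_assoc, Rinv_l in H by nra.
  nra.
Qed.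

Lemma mesh_ratio_small dx dt r R2 : 0 < dx -> 0 < dt -> 0 < r ->
  dx * R2 <= r ^ 2 -> dt * r < dx -> dt ^ 2 * R2 < 2 * dx.
Proof.
  intros Hdx Hdt Hr HR Hcfl.
  assert (dx * (dt ^ 2 * R2) < dx * dx).
  { apply Rle_lt_trans with ((dt * r) ^ 2).
    - rewrite Rpow_mult_distr. pose proof (pow2_ge_0 dt). nra.
    - pose proof (Rmult_lt_0_compat _ _ Hdt Hr). nra. }
  nra.
Qed.

Theorem theorem3p2 (L T : R) (E : R -> R -> C) (N V : R -> R -> R)
  (Cinf CV p r : R) :
  0 < L -> 0 < T ->
  zakharov_solution L T E N V ->
  0 < Cinf ->
  (* a priori bound: for all sufficiently small dx, every solution of the
     scheme (with the prescribed initial data) is bounded by Cinf *)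
  (exists dx0 : R, 0 < dx0 /\
     forall (K M m : nat), (0 < K)%nat -> (0 < M)%nat -> (m <= M)%nat ->
     let dx := L / INR K in
     let dt := T / INR M in
     dx < dx0 ->
     forall V0 : Z -> R, periodicR K V0 ->
     (forall k : Z, Rabs (V0 k - V 0 (IZR k * dx)) <= CV * dx ^ 2) ->
     forall (Ed : nat -> Z -> C) (Nd Vd : nat -> Z -> R),
     dvdm_solution K dx dt (fun k => E 0 (IZR k * dx)) (fun k => N 0 (IZR k * dx))
       V0 m Ed Nd Vd ->
     norm2C K dx (Ed m) <= Cinf /\
     norm2C K dx (dxpC dx (Ed m)) <= Cinf /\
     norminfC K (Ed m) <= Cinf /\
     norm2R K dx (Nd m) <= Cinf /\
     norm2R K dx (dxpR dx (Vd m)) <= Cinf) ->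
  3 < p -> Cinf <= r ->
  exists delta : R, 0 < delta /\
    forall (K M : nat), (0 < K)%nat -> (0 < M)%nat ->
    let dx := L / INR K in
    let dt := T / INR M in
    dx < delta -> dt < delta ->
    dt < dx -> dt < dvdm_eps1 L dx p r -> dt < dvdm_eps2 L dx p r ->
    forall V0 : Z -> R, periodicR K V0 ->
    (forall k : Z, Rabs (V0 k - V 0 (IZR k * dx)) <= CV * dx ^ 2) ->
    (exists (Ed : nat -> Z -> C) (Nd Vd : nat -> Z -> R),
       dvdm_solution K dx dt (fun k => E 0 (IZR k * dx)) (fun k => N 0 (IZR k * dx))
         V0 M Ed Nd Vd /\
       forall (Ed' : nat -> Z -> C) (Nd' Vd' : nat -> Z -> R),
       dvdm_solution K dx dt (fun k => E 0 (IZR k * dx)) (fun k => N 0 (IZR k * dx))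
         V0 M Ed' Nd' Vd' ->
       forall (j : nat) (k : Z), (j <= M)%nat ->
         Ed' j k = Ed j k /\ Nd' j k = Nd j k /\ Vd' j k = Vd j k).
Proof.
  intros HL HT Hsol HCinf [dx0 [Hdx0 Hapriori]] Hp Hr.
  exists dx0. split; [exact Hdx0|].
  intros K M HK HM dx dt Hdx_small _ _ _ Heps2 V0 HV0 HV0_err.
  assert (Hdx : 0 < dx) by (apply Rdiv_lt_0_compat; [lra | apply lt_0_INR; lia]).
  assert (Hdt : 0 < dt) by (apply Rdiv_lt_0_compat; [lra | apply lt_0_INR; lia]).
  destruct (zakharov_grid_periodic L T E N V K HL ltac:(lra) HK Hsol) as [HE0 HN0].
  apply dvdm_wellposed; try assumption.
  intros m Ed Nd Vd Hm Hsol_m.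
  destruct (Hapriori K M m HK HM ltac:(lia) Hdx_small V0 HV0 HV0_err Ed Nd Vd Hsol_m)
    as [Hnorm _].
  change (L / INR K) with dx in Hnorm.
  apply (mesh_ratio_small dx dt r); [assumption | assumption | lra | |].
  - rewrite <- norm2C_sq by lra. apply pow_incr. split; [apply sqrt_pos | lra].
  - apply (lt_dvdm_eps2 L dx dt p r); [exact Hdx | exact Hdt | lra | lra | exact Heps2].
Qed.
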